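(* Let $p>1$ be an integer and let $\mathbf{l}=(l_1,\dots,l_q)\in\mathbb{N}^q$, $\mathbf{r}=(r_1,\dots,r_s)\in\mathbb{N}^s$ have all components greater than $1$. Let $n=p\,\Pi(\mathbf{l})\,\Pi(\mathbf{r})$ and $A\in\{0,1\}^{n\times n}$. Then $A$ admits both an $(l_1,\dots,l_q,\,p\Pi(\mathbf{r}))$ factorization and a $(p\Pi(\mathbf{l}),\,r_1,\dots,r_s)$ factorization if and only if $A$ admits an $(l_1,\dots,l_q,p,r_1,\dots,r_s)$ factorization.
   Context: For $\mathbf{n}=(n_1,\dots,n_d)$, $\Pi(\mathbf{n})=\prod_{i=1}^d n_i$. Kronecker products of binary matrices use Boolean arithmetic ($1+1=1$). For positive integers $n_1,\dots,n_m$ with $\prod n_i=n$, an $(n_1,\dots,n_m)$ factorization of $A\in\{0,1\}^{n\times n}$ is an expression $A=A_1\otimes\cdots\otimes A_m$ with $A_i\in\{0,1\}^{n_i\times n_i}$. *)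

From mathcomp Require Import all_boot all_algebra.
Set Implicit Arguments. Unset Strict Implicit. Unset Printing Implicit Defensive.

(* entry (a,b) of a square binary matrix, with indices given as naturals
   (false outside the index range; never used out of range below) *)
Definition mxe (m : nat) (M : 'M[bool]_m) (a b : nat) : bool :=
  match @insub _ (fun x => x < m) _ a, @insub _ (fun x => x < m) _ b with
  | Some a', Some b' => M a' b'
  | _, _ => false
  end.

(* Boolean Kronecker product A (x) B of A : m x m and B : k x k:
   (A (x) B)_{(i1 k + i2),(j1 k + j2)} = A_{i1 j1} * B_{i2 j2} *)
Definition bkron (m k : nat) (A : 'M[bool]_m) (B : 'M[bool]_k) : 'M[bool]_(m * k) :=
  \matrix_(i, j) (mxe A (i %/ k) (j %/ k) && mxe B (i %% k) (j %% k)).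

Definition bmx := {m : nat & 'M[bool]_m}.

Definition bkron_pack (X Y : bmx) : bmx :=
  existT _ (tag X * tag Y) (bkron (tagged X) (tagged Y)).

Definition bmx_one : bmx := existT _ 1 (const_mx true : 'M[bool]_1).

Definition bkron_seq (s : seq bmx) : bmx := foldr bkron_pack bmx_one s.

Definition factorization (n : nat) (A : 'M[bool]_n) (ns : seq nat) : Prop :=
  \prod_(x <- ns) x = n /\
  exists s : seq bmx,
    map tag s = ns /\ tag (bkron_seq s) = n /\
    forall i j : 'I_n, A i j = mxe (tagged (bkron_seq s)) i j.

From mathcomp Require Import all_boot all_algebra.
Set Implicit Arguments. Unset Strict Implicit. Unset Printing Implicit Defensive.

(* Suppose A = T1 (x) C = D (x) T2, where T1 has size Pi(l), C has size p Pi(r)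
   and T2 has size Pi(r).  If T1 = 0 then A = 0 and any middle factor works.
   Otherwise pick an entry (a, b) with T1_ab = 1: the (a, b) block of A is C,
   and read through the second factorization the same block is P (x) T2, where
   P is the p x p block of D at position (a, b).  Hence A = T1 (x) P (x) T2.
   Conversely, grouping adjacent factors of a factorization gives a coarser one. *)

(* Products are handled through their entry functions on nat x nat (zero
   outside the index range), which avoids casts between matrix sizes. *)
Local Notation kdim s := (tag (bkron_seq s)).
Local Notation kent s := (mxe (tagged (bkron_seq s))).

Lemma mxe_lt m (M : 'M[bool]_m) a b : mxe M a b -> (a < m) && (b < m).
Proof.
by rewrite /mxe; case: insubP => [a' -> _|//]; case: insubP => [b' -> _|//].
Qed.

Lemma mxe_out m (M : 'M[bool]_m) a b : ~~ ((a < m) && (b < m)) -> mxe M a b = false.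
Proof. by apply: contraNF; apply: mxe_lt. Qed.

Lemma mxe_ord m (M : 'M[bool]_m) (i j : 'I_m) : mxe M i j = M i j.
Proof. by rewrite /mxe !valK. Qed.

Lemma mxe_matrix m (key : unit) (f : nat -> nat -> bool) a b :
  mxe (\matrix[key]_(i, j) f i j : 'M_m) a b = [&& a < m, b < m & f a b].
Proof.
have [lt_am|ge_am] := ltnP a m; last by rewrite mxe_out // ltnNge ge_am.
have [lt_bm|ge_bm] := ltnP b m; last by rewrite mxe_out // [b < m]ltnNge ge_bm andbF.
by rewrite -[a]/(val (Ordinal lt_am)) -[b]/(val (Ordinal lt_bm)) mxe_ord mxE.
Qed.

Lemma mxe_bkron m k (X : 'M[bool]_m) (Y : 'M[bool]_k) a b :
  mxe (bkron X Y) a b = mxe X (a %/ k) (b %/ k) && mxe Y (a %% k) (b %% k).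
Proof.
rewrite (mxe_matrix _ _ (fun a b => mxe X (a %/ k) (b %/ k) && mxe Y (a %% k) (b %% k))).
case XY: (mxe X _ _ && mxe Y _ _); rewrite ?andbF //.
move/andP: XY => [/mxe_lt/andP[lt_a lt_b] /mxe_lt/andP[lt_ak _]].
have k_gt0 : 0 < k by apply: leq_ltn_trans lt_ak.
by rewrite -!ltn_divLR // lt_a lt_b.
Qed.

Definition bmx_of_fun n (f : nat -> nat -> bool) : bmx :=
  existT _ n (\matrix_(i < n, j < n) f i j)%R.

Lemma mxe_bmx_of_fun n f a b :
  mxe (tagged (bmx_of_fun n f)) a b = [&& a < n, b < n & f a b].
Proof. exact: mxe_matrix. Qed.

Lemma kdim_prod s : kdim s = \prod_(x <- map tag s) x.
Proof. by elim: s => [|x s IHs]; rewrite ?big_nil // big_cons -IHs. Qed.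

Lemma kdim_cat s1 s2 : kdim (s1 ++ s2) = kdim s1 * kdim s2.
Proof. by rewrite !kdim_prod map_cat big_cat. Qed.

Lemma kdim_seq1 x : kdim [:: x] = tag x.
Proof. exact: muln1. Qed.

Lemma kent_nil a b : kent [::] a b = (a == 0) && (b == 0).
Proof. by rewrite (mxe_matrix 1 _ (fun _ _ => true)) !ltnS !leqn0 andbT. Qed.

Lemma kent_cons x s a b : kent (x :: s) a b =
  mxe (tagged x) (a %/ kdim s) (b %/ kdim s) && kent s (a %% kdim s) (b %% kdim s).
Proof. exact: mxe_bkron. Qed.

Lemma kent_seq1 x : kent [:: x] =2 mxe (tagged x).
Proof. by move=> a b; rewrite kent_cons !divn1 !modn1 kent_nil andbT. Qed.

Lemma kent_cat s1 s2 a b : kent (s1 ++ s2) a b =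
  kent s1 (a %/ kdim s2) (b %/ kdim s2) && kent s2 (a %% kdim s2) (b %% kdim s2).
Proof.
elim: s1 a b => [|x s1 IHs1] a b /=; last first.
  rewrite !kent_cons IHs1 kdim_cat -!andbA; congr andb.
    by rewrite mulnC !divnMA.
  by rewrite -!modn_divl !modn_dvdm ?dvdn_mull.
rewrite kent_nil; have [s2_0|s2_gt0] := posnP (kdim s2).
  by rewrite !mxe_out ?andbF // s2_0.
have [lt_a|ge_a] := ltnP a (kdim s2); last first.
  rewrite mxe_out; last by rewrite [a < _]ltnNge ge_a.
  by rewrite eqn0Ngt divn_gt0 // ge_a.
have [lt_b|ge_b] := ltnP b (kdim s2); last first.
  rewrite mxe_out; last by rewrite [b < _]ltnNge ge_b andbF.
  by rewrite [b %/ _ == 0]eqn0Ngt divn_gt0 // ge_b andbF.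
by rewrite !divn_small ?modn_small.
Qed.

Lemma kent_cat_congr s1 s1' s2 s2' : kdim s2 = kdim s2' ->
  kent s1 =2 kent s1' -> kent s2 =2 kent s2' -> kent (s1 ++ s2) =2 kent (s1' ++ s2').
Proof. by move=> eq_dim eq1 eq2 a b; rewrite !kent_cat eq1 eq2 eq_dim. Qed.

Lemma factorizationP n (A : 'M[bool]_n) ns : factorization A ns <->
  \prod_(x <- ns) x = n /\ exists2 s, map tag s = ns & kent s =2 mxe A.
Proof.
split=> [[prod_ns [s [tag_s [dim_s A_s]]]] | [prod_ns [s tag_s A_s]]]; split=> //.
  exists s => //; clear prod_ns.
  move: (bkron_seq s) dim_s A_s => [m M] /= eq_mn; subst n => A_M.
  by have -> : A = M by apply/matrixP => i j; rewrite A_M mxe_ord.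
exists s; do 2!split=> //; first by rewrite kdim_prod tag_s.
by move=> i j; rewrite A_s mxe_ord.
Qed.

Lemma map_eq_cat (T U : Type) (f : T -> U) s l1 l2 : map f s = l1 ++ l2 ->
  exists s1 s2, [/\ s = s1 ++ s2, map f s1 = l1 & map f s2 = l2].
Proof.
move=> eq_s; exists (take (size l1) s), (drop (size l1) s).
by rewrite cat_take_drop map_take map_drop eq_s take_size_cat ?drop_size_cat.
Qed.

Lemma block_kron_factor t1 c d t2 p a b :
    0 < p -> 0 < kdim t2 -> tag c = p * kdim t2 ->
    kent (t1 ++ [:: c]) =2 kent (d :: t2) -> kent t1 a b ->
  mxe (tagged c) =2
    kent (bmx_of_fun p (fun x y => mxe (tagged d) (a * p + x) (b * p + y)) :: t2).
Proof.
case: c => n C p_gt0 t2_gt0 eq_n; rewrite /= in eq_n; subst n => eq_cd t1_ab u v.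
set R := kdim t2 in t2_gt0 C eq_cd *.
have [/andP[lt_u lt_v] | out] := boolP ((u < p * R) && (v < p * R)); last first.
  by rewrite !mxe_out.
have shift_c : kent (t1 ++ [:: existT _ _ C]) (a * (p * R) + u) (b * (p * R) + v)
               = mxe C u v.
  rewrite kent_cat kent_seq1 kdim_seq1 /= !divnMDl ?muln_gt0 ?p_gt0 //.
  by rewrite !modnMDl !divn_small // !modn_small // !addn0 t1_ab.
have shift_d : kent (d :: t2) (a * (p * R) + u) (b * (p * R) + v) =
   mxe (tagged d) (a * p + u %/ R) (b * p + v %/ R) && kent t2 (u %% R) (v %% R).
  by rewrite kent_cons !mulnA !divnMDl // !modnMDl.
by rewrite -shift_c eq_cd shift_d kent_cons mxe_bmx_of_fun !ltn_divLR // lt_u lt_v.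
Qed.

Lemma kron_factor_refine t1 c d t2 p :
    0 < p -> 0 < kdim t2 -> tag c = p * kdim t2 ->
    kent (t1 ++ [:: c]) =2 kent (d :: t2) ->
  exists2 P, tag P = p & kent (t1 ++ [:: c]) =2 kent (t1 ++ P :: t2).
Proof.
move=> p_gt0 t2_gt0 tag_c eq_cd.
have refine_c P : tag P = p -> mxe (tagged c) =2 kent (P :: t2) ->
    kent (t1 ++ [:: c]) =2 kent (t1 ++ P :: t2).
  move=> tag_P eq_c; apply: kent_cat_congr => //.
    by rewrite kdim_seq1 tag_c -tag_P.
  by move=> u v; rewrite kent_seq1 eq_c.
case: (pickP (fun ab : 'I_(kdim t1) * 'I_(kdim t1) => kent t1 ab.1 ab.2)).
  move=> [a b] t1_ab.
  exists (bmx_of_fun p (fun x y => mxe (tagged d) (a * p + x) (b * p + y))) => //.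
  by apply: refine_c; last exact: block_kron_factor t1_ab.
move=> t1_0; exists (bmx_of_fun p (fun _ _ => false)) => // u v.
have t1_false a b : kent t1 a b = false.
  have [/andP[lt_a lt_b] | out] := boolP ((a < kdim t1) && (b < kdim t1)).
    exact: (t1_0 (Ordinal lt_a, Ordinal lt_b)).
  exact: mxe_out.
by rewrite !kent_cat !t1_false.
Qed.

Lemma factorization_merge n (A : 'M[bool]_n) l m r :
  factorization A (l ++ m ++ r) -> factorization A (l ++ \prod_(x <- m) x :: r).
Proof.
case/factorizationP=> prod_lmr [s tag_s A_s].
have [s1 [s23 [eq_s tag_s1 /map_eq_cat[s2 [s3 [eq_s23 tag_s2 tag_s3]]]]]] :=
  map_eq_cat tag_s.
apply/factorizationP; split; first by rewrite -prod_lmr !big_cat big_cons.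
exists (s1 ++ bkron_seq s2 :: s3).
  by rewrite map_cat /= tag_s1 tag_s3 kdim_prod tag_s2.
move=> u v; rewrite -A_s eq_s eq_s23; apply: kent_cat_congr => //.
  by rewrite kdim_cat.
by apply: (kent_cat_congr (s1 := [:: bkron_seq s2])) => //; apply: kent_seq1.
Qed.

Lemma factorization_refine n (A : 'M[bool]_n) l q p r :
    0 < p -> 0 < \prod_(x <- r) x ->
    factorization A (l ++ [:: p * \prod_(x <- r) x]) -> factorization A (q :: r) ->
  factorization A (l ++ p :: r).
Proof.
move=> p_gt0 r_gt0 /factorizationP[prod_l [s1 tag_s1 A_s1]].
move=> /factorizationP[_ [[|d t2] //= [_ tag_t2] A_s2]].
move: A_s1; have [t1 [s1' [-> tag_t1]]] := map_eq_cat tag_s1.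
case: s1' => [|c []] //= [tag_c] A_s1.
have kdim_t2 : kdim t2 = \prod_(x <- r) x by rewrite kdim_prod tag_t2.
rewrite -kdim_t2 in r_gt0 tag_c.
have [P tag_P refine] : exists2 P, tag P = p &
    kent (t1 ++ [:: c]) =2 kent (t1 ++ P :: t2).
  by apply: kron_factor_refine => // u v; rewrite A_s1; apply/esym/A_s2.
apply/factorizationP; split; first by rewrite -prod_l !big_cat big_cons big_seq1.
exists (t1 ++ P :: t2); first by rewrite map_cat /= tag_t1 tag_P tag_t2.
by move=> u v; rewrite -refine A_s1.
Qed.

Theorem corollary1 (p : nat) (l r : seq nat)
  (A : 'M[bool]_(p * \prod_(x <- l) x * \prod_(x <- r) x)) :
  1 < p -> 0 < size l -> 0 < size r ->
  all (fun x => 1 < x) l -> all (fun x => 1 < x) r ->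
  (factorization A (l ++ [:: p * \prod_(x <- r) x]) /\
   factorization A (p * \prod_(x <- l) x :: r))
  <-> factorization A (l ++ p :: r).
Proof.
move=> p_gt1 _ _ _ r_gt1.
have r_gt0 : 0 < \prod_(x <- r) x.
  by rewrite big_seq; apply: prodn_cond_gt0 => x /(allP r_gt1)/ltnW.
split=> [[fact_l fact_r] | fact].
  exact: factorization_refine (ltnW p_gt1) r_gt0 fact_l fact_r.
split.
  have := @factorization_merge _ A l (p :: r) [::].
  by rewrite cats0 big_cons; apply.
have := @factorization_merge _ A [::] (l ++ [:: p]) r.
by rewrite big_cat big_seq1 /= -catA (mulnC _ p); apply.
Qed.
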